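(* Let $X_1$, $X_2$ and $Y$ be real Banach spaces, let $A$ be a separable subset of $X_1\oplus_\infty X_2$, and let $\Delta:S_{X_1\oplus_\infty X_2}\to S_Y$ be a surjective isometry. Then there exist separable subspaces $M_1\subseteq X_1$, $M_2\subseteq X_2$ and $N\subseteq Y$ such that $A\subseteq M_1\oplus_\infty M_2$ and $\Delta(S_{M_1\oplus_\infty M_2})=S_N$.
   Context: $X_1\oplus_\infty X_2$ is $X_1\times X_2$ with norm $\|(x_1,x_2)\|=\max\{\|x_1\|,\|x_2\|\}$; $S_E$ denotes the unit sphere of a normed space $E$. *)

From HB Require Import structures.
From mathcomp Require Import all_boot all_order all_algebra.
From mathcomp Require Import all_classical all_reals all_analysis.
Set Implicit Arguments. Unset Strict Implicit. Unset Printing Implicit Defensive.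
Import Order.TTheory GRing.Theory Num.Theory.
Import numFieldNormedType.Exports.
Local Open Scope classical_set_scope.
Local Open Scope ring_scope.

Definition sphere_in {R : numDomainType} {V : normedModType R} (M : set V) : set V :=
  [set x | M x /\ `|x| = 1].

Definition sphere {R : numDomainType} {V : normedModType R} : set V :=
  sphere_in setT.

Definition closed_subspace {R : numDomainType} {V : normedModType R} (M : set V) : Prop :=
  [/\ M 0, (forall (a : R) (x y : V), M x -> M y -> M (a *: x + y)) & closed M].

Definition separable {T : topologicalType} (A : set T) : Prop :=
  exists D : set T, [/\ countable D, D `<=` A & A `<=` closure D].

(* M1 (+)_oo M2 inside X1 (+)_oo X2 (the product normed module of mathcomp-analysis,
   whose norm is the max norm, see prod_normE). *)
Definition prod_sub {X1 X2 : Type} (M1 : set X1) (M2 : set X2) : set (X1 * X2) :=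
  [set z | M1 z.1 /\ M2 z.2].

From HB Require Import structures.
From mathcomp Require Import all_boot all_order all_algebra.
From mathcomp Require Import all_classical all_reals all_analysis.
From mathcomp Require Import lra.
Set Implicit Arguments. Unset Strict Implicit. Unset Printing Implicit Defensive.
Import Order.TTheory GRing.Theory Num.Theory.
Import numFieldNormedType.Exports.
Local Open Scope classical_set_scope.
Local Open Scope ring_scope.

(* Start from a countable set D0 dense in A and alternate two countable
   closure steps: push the normalized nonzero rational combinations of the
   coordinates forward by Delta, and pull the normalized nonzero rational
   combinations of the resulting points of S_Y back by a right inverse g of
   Delta.  After countably many steps the closures M1, M2, N of the rational
   spans are separable closed subspaces.  Since Delta and g are isometries on
   the unit spheres and normalization at most doubles the distance to a unit
   vector, every point of S_{M1 (+) M2} is pushed into S_N and every point of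
   S_N is pulled back into S_{M1 (+) M2}. *)

Lemma countableU {T : Type} (A B : set T) :
  countable A -> countable B -> countable (A `|` B).
Proof.
move=> cA cB.
have -> : A `|` B = \bigcup_(b in [set: bool]) (if b then A else B).
  apply/seteqP; split => x.
    by case=> h; [exists true | exists false].
  by case=> -[] _ h; [left | right].
by apply: bigcup_countable; [exact: countableP | case].
Qed.

Lemma countable_image {T U : Type} (f : T -> U) (A : set T) :
  countable A -> countable (f @` A).
Proof. exact: sub_countable (card_image_le f A). Qed.

Section RationalSpan.
Variables (R : unitRingType) (V : lmodType R).

Definition Qsubspace (D : set V) : Prop :=
  D 0 /\ forall (q : rat) x y, D x -> D y -> D (ratr q *: x + y).

Fixpoint Qspan_iter (S : set V) (n : nat) : set V :=
  if n is k.+1 then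
    let T := Qspan_iter S k in
    T `|` [set ratr t.1 *: t.2.1 + t.2.2 | t in [set: rat] `*` (T `*` T)]
  else S `|` [set 0].

Definition Qspan (S : set V) : set V := \bigcup_(n in [set: nat]) Qspan_iter S n.

Lemma Qspan_iter_mono (S : set V) n m : (n <= m)%N -> Qspan_iter S n `<=` Qspan_iter S m.
Proof.
move=> /subnKC <-; elim: (m - n)%N => [|k IH]; first by rewrite addn0.
by rewrite addnS => x /IH; left.
Qed.

Lemma Qspan_iterS (S S' : set V) n : S `<=` S' -> Qspan_iter S n `<=` Qspan_iter S' n.
Proof.
move=> sS; elim: n => [|n IH] x /=.
  by case=> h; [left; apply: sS | right].
case=> [h|[t [_ [h1 h2]] <-]]; first by left; apply: IH.
by right; exists t => //; split => //; split; apply: IH.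
Qed.

Lemma sub_Qspan (S : set V) : S `<=` Qspan S.
Proof. by move=> x h; exists 0%N => //; left. Qed.

Lemma QspanS (S S' : set V) : S `<=` S' -> Qspan S `<=` Qspan S'.
Proof. by move=> sS x [n _ h]; exists n => //; apply: Qspan_iterS h. Qed.

Lemma Qspan_Qsubspace (S : set V) : Qsubspace (Qspan S).
Proof.
split; first by exists 0%N => //; right.
move=> q x y [n _ hx] [m _ hy]; exists (maxn n m).+1 => //=; right.
exists (q, (x, y)) => //; split => //; split => /=.
  exact: Qspan_iter_mono (leq_maxl n m) _ hx.
exact: Qspan_iter_mono (leq_maxr n m) _ hy.
Qed.

Lemma Qspan_countable (S : set V) : countable S -> countable (Qspan S).
Proof.
move=> cS; apply: bigcup_countable; first exact: countableP.
move=> n _; elim: n => [|n IH] /=; first exact/countableU/countable1.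
apply: countableU => //; apply: countable_image.
by apply: countableX; [exact: countableP | exact: countableX].
Qed.

Lemma bigcup_Qspan_Qsubspace (G : nat -> set V) :
  (forall n m, (n <= m)%N -> G n `<=` G m) ->
  Qsubspace (\bigcup_(n in [set: nat]) Qspan (G n)).
Proof.
move=> mono; split; first by exists 0%N => //; case: (Qspan_Qsubspace (G 0%N)).
move=> q x y [n _ hx] [m _ hy]; exists (maxn n m) => //.
have [_ lin] := Qspan_Qsubspace (G (maxn n m)); apply: lin.
  exact: QspanS (mono _ _ (leq_maxl n m)) _ hx.
exact: QspanS (mono _ _ (leq_maxr n m)) _ hy.
Qed.

End RationalSpan.

Lemma closure_normP {R : realType} {V : normedModType R} (D : set V) (x : V) :
  closure D x <-> (forall e : R, 0 < e -> exists2 d, D d & `|x - d| < e).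
Proof.
split=> [cx e e0|H B /nbhs_ballP [e /= e0 sB]].
  have [|d [Dd]] := cx (ball x e); first by apply/nbhs_ballP; exists e.
  by rewrite -ball_normE; exists d.
have [d Dd dx] := H e e0.
by exists d; split => //; apply: sB; rewrite -ball_normE.
Qed.

Definition normalize {R : numFieldType} {V : normedModType R} (z : V) : V := `|z|^-1 *: z.

Lemma norm_normalize {R : numFieldType} {V : normedModType R} (z : V) :
  z != 0 -> `|normalize z| = 1.
Proof. by move=> z0; rewrite normrZ ger0_norm ?invr_ge0 // mulVf // normr_eq0. Qed.

Section NormedClosure.
Variables (R : realType) (V : normedModType R).

Lemma closure_Qsubspace_lin (D : set V) (a : R) x y :
  Qsubspace D -> closure D x -> closure D y -> closure D (a *: x + y).
Proof.
move=> [_ linD] /closure_normP cx /closure_normP cy; apply/closure_normP => e e0.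
set c := e / 3; have c0 : 0 < c by rewrite /c; lra.
have cx0 : 0 < c / (`|x| + 1) by rewrite divr_gt0 // ltr_pwDr.
have [q] := @rat_in_itvoo R (a - c / (`|x| + 1)) (a + c / (`|x| + 1)) ltac:(lra).
rewrite in_itv /= => /andP[aq1 aq2].
have [d1 D1 h1] := cx _ (divr_gt0 c0 (ltr_pwDr ltr01 (normr_ge0 (ratr q : R)))).
have [d2 D2 h2] := cy _ c0.
exists (ratr q *: d1 + d2); first exact: linD.
have -> : a *: x + y - (ratr q *: d1 + d2) =
    (a - ratr q) *: x + (ratr q *: (x - d1) + (y - d2)).
  rewrite scalerBl scalerBr opprD !addrA subrK; congr (_ + _); exact: addrAC.
have k1 : `|a - ratr q| * `|x| < c.
  apply: (le_lt_trans (y := `|a - ratr q| * (`|x| + 1))).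
    by apply: ler_wpM2l => //; lra.
  by rewrite -ltr_pdivlMr ?ltr_pwDr // ltr_norml; apply/andP; split; lra.
have k2 : `|(ratr q : R)| * `|x - d1| < c.
  apply: (le_lt_trans (y := (`|(ratr q : R)| + 1) * `|x - d1|)).
    by apply: ler_wpM2r => //; lra.
  by rewrite mulrC -ltr_pdivlMr // ltr_pwDr.
apply: (le_lt_trans (ler_normD _ _)); rewrite normrZ.
apply: (le_lt_trans (lerD (lexx _) (ler_normD _ _))); rewrite normrZ.
rewrite /c in k1 k2 h2 *; lra.
Qed.

Lemma closure_closed_subspace (L : set V) :
  countable L -> Qsubspace L -> closed_subspace (closure L) /\ separable (closure L).
Proof.
move=> cL linL; split; last by exists L; split => //; exact: subset_closure.
split; [by apply: subset_closure; case: linL | | exact: closed_closure].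
by move=> a x y; apply: closure_Qsubspace_lin.
Qed.

Lemma closure_bigcup_Qspan (G : nat -> set V) :
  (forall n, countable (G n)) -> (forall n m, (n <= m)%N -> G n `<=` G m) ->
  let M := closure (\bigcup_(n in [set: nat]) Qspan (G n)) in
  closed_subspace M /\ separable M.
Proof.
move=> cG mono; apply: closure_closed_subspace; last exact: bigcup_Qspan_Qsubspace.
by apply: bigcup_countable => // n _; apply: Qspan_countable.
Qed.

(* ||z| - 1| <= |x - z|, so normalizing z moves it by at most |x - z| *)
Lemma dist_normalize (x z : V) :
  `|x| = 1 -> `|x - z| < 1 -> z != 0 /\ `|x - normalize z| <= 2 * `|x - z|.
Proof.
move=> x1 xz.
have z_gt0 : 0 < `|z| by have := ler_normD (x - z) z; rewrite subrK x1; lra.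
have z0 : z != 0 by rewrite -normr_gt0.
split=> //.
have zn : `|z - normalize z| <= `|x - z|.
  have -> : z - normalize z = (`|z| - 1) *: normalize z.
    by rewrite scalerBl scale1r scalerA mulfV ?scale1r // gt_eqF.
  rewrite normrZ norm_normalize // mulr1 -[X in `|_ - X|]x1 distrC.
  exact: ler_dist_dist.
have := ler_distD z x (normalize z); lra.
Qed.

Lemma closure_sphere_isometry (W : normedModType R) (f : V -> W) (S : set V) (x : V) :
  (forall u v, sphere u -> sphere v -> `|f u - f v| = `|u - v|) ->
  sphere x -> closure S x -> closure ((f \o normalize) @` (S `\ 0)) (f x).
Proof.
move=> iso [_ x1] /closure_normP cx; apply/closure_normP => e e0.
have [z Sz] : exists2 z, S z & `|x - z| < Num.min (e / 2) 1.
  by apply: cx; rewrite lt_min; apply/andP; split; lra.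
rewrite lt_min => /andP[xz_e xz1].
have [z0 xnz] := dist_normalize x1 xz1.
exists (f (normalize z)); first by exists z => //; split => //; exact/eqP.
rewrite iso //; last by split => //; exact: norm_normalize.
by apply: (le_lt_trans xnz); rewrite -ltr_pdivlMl //; lra.
Qed.

End NormedClosure.

Section ProductClosure.
Variables (R : realType) (X1 X2 : normedModType R).

Lemma closure_prod_sub (A : set X1) (B : set X2) (z : X1 * X2) :
  closure A z.1 -> closure B z.2 -> closure (prod_sub A B) z.
Proof.
move=> /closure_normP cA /closure_normP cB; apply/closure_normP => e e0.
have [a Aa za] := cA e e0; have [b Bb zb] := cB e e0.
by exists (a, b) => //; rewrite prod_normE gt_max za zb.
Qed.

Lemma closure_sub_prod_proj (S : set (X1 * X2)) :
  closure S `<=` prod_sub (closure (fst @` S)) (closure (snd @` S)).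
Proof.
move=> z /closure_normP cz; split; apply/closure_normP => e e0;
  have [w Sw zw] := cz e e0; move: zw; rewrite prod_normE gt_max => /andP[z1 z2].
  by exists w.1 => //; exists w.
by exists w.2 => //; exists w.
Qed.

End ProductClosure.

Section Saturation.
Variables (R : realType) (X1 X2 Y : normedModType R).
Variables (Delta : X1 * X2 -> Y) (g : Y -> X1 * X2) (D0 : set (X1 * X2)).

Definition span_prod (S : set (X1 * X2)) : set (X1 * X2) :=
  prod_sub (Qspan (fst @` S)) (Qspan (snd @` S)).

Definition push (S : set (X1 * X2)) : set Y :=
  (Delta \o normalize) @` (span_prod S `\ 0).

Fixpoint saturation (n : nat) : set (X1 * X2) :=
  if n is k.+1 then
    saturation k `|` (g \o normalize) @` (Qspan (push (saturation k)) `\ 0)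
  else D0.

Definition M1 : set X1 := closure (\bigcup_(n in [set: nat]) Qspan (fst @` saturation n)).
Definition M2 : set X2 := closure (\bigcup_(n in [set: nat]) Qspan (snd @` saturation n)).
Definition N : set Y := closure (\bigcup_(n in [set: nat]) Qspan (push (saturation n))).

Lemma saturation_mono n m : (n <= m)%N -> saturation n `<=` saturation m.
Proof.
move=> /subnKC <-; elim: (m - n)%N => [|k IH]; first by rewrite addn0.
by rewrite addnS => x /IH; left.
Qed.

Lemma pushS (S S' : set (X1 * X2)) : S `<=` S' -> push S `<=` push S'.
Proof.
move=> sS; apply: image_subset => z [[z1 z2] z0].
by split=> //; split; [apply: QspanS z1 | apply: QspanS z2]; apply: image_subset.
Qed.

Lemma push_countable (S : set (X1 * X2)) : countable S -> countable (push S).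
Proof.
move=> cS; apply: countable_image.
apply: (@sub_countable _ _ _ (Qspan (fst @` S) `*` Qspan (snd @` S))).
  by apply: subset_card_le => z [].
by apply: countableX; apply/Qspan_countable/countable_image.
Qed.

Hypothesis cD0 : countable D0.

Lemma saturation_countable n : countable (saturation n).
Proof.
elim: n => [|n IH] //=; apply: countableU => //; apply: countable_image.
apply: (@sub_countable _ _ _ (Qspan (push (saturation n)))).
  by apply: subset_card_le => w [].
exact/Qspan_countable/push_countable.
Qed.

Lemma M1_closed_subspace : closed_subspace M1 /\ separable M1.
Proof.
apply: closure_bigcup_Qspan => [n|n m nm]; last exact/image_subset/saturation_mono.
exact/countable_image/saturation_countable.
Qed.

Lemma M2_closed_subspace : closed_subspace M2 /\ separable M2.
Proof.
apply: closure_bigcup_Qspan => [n|n m nm]; last exact/image_subset/saturation_mono.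
exact/countable_image/saturation_countable.
Qed.

Lemma N_closed_subspace : closed_subspace N /\ separable N.
Proof.
apply: closure_bigcup_Qspan => [n|n m nm]; last exact/pushS/saturation_mono.
exact/push_countable/saturation_countable.
Qed.

Lemma closure_saturation_sub :
  closure (\bigcup_(n in [set: nat]) saturation n) `<=` prod_sub M1 M2.
Proof.
move=> z /closure_sub_prod_proj [z1 z2]; split; [apply: closureS z1 | apply: closureS z2];
  by move=> _ [w [n _ wn] <-]; exists n => //; apply: sub_Qspan; exists w.
Qed.

Lemma closure_D0_sub : closure D0 `<=` prod_sub M1 M2.
Proof.
move=> z D0z; apply: closure_saturation_sub; apply: closureS D0z => x D0x.
by exists 0%N.
Qed.

Hypothesis Delta_sphere : forall x, sphere x -> sphere (Delta x).
Hypothesis Delta_iso : forall x y, sphere x -> sphere y -> `|Delta x - Delta y| = `|x - y|.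
Hypothesis g_sphere : forall y, sphere y -> sphere (g y).
Hypothesis Delta_g : forall y, sphere y -> Delta (g y) = y.

Lemma g_iso u v : sphere u -> sphere v -> `|g u - g v| = `|u - v|.
Proof.
by move=> su sv; have := Delta_iso (g_sphere su) (g_sphere sv); rewrite !Delta_g // => ->.
Qed.

Lemma Delta_sphere_prod_sub : Delta @` sphere_in (prod_sub M1 M2) `<=` sphere_in N.
Proof.
move=> _ [x [[x1 x2] nx] <-]; have sx : sphere x by [].
split; last by have [] := Delta_sphere sx.
have := closure_sphere_isometry Delta_iso sx (closure_prod_sub x1 x2).
apply: closureS => _ [z [[[n _ z1] [m _ z2]] z0] <-].
exists (maxn n m) => //; apply: sub_Qspan; exists z => //; split=> //; split.
  exact: QspanS (image_subset _ (saturation_mono (leq_maxl n m))) _ z1.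
exact: QspanS (image_subset _ (saturation_mono (leq_maxr n m))) _ z2.
Qed.

Lemma sphere_N_sub_Delta : sphere_in N `<=` Delta @` sphere_in (prod_sub M1 M2).
Proof.
move=> y [Ny y1]; have sy : sphere y by [].
exists (g y); last exact: Delta_g.
split; last by have [] := g_sphere sy.
apply: closure_saturation_sub.
have := closure_sphere_isometry g_iso sy Ny; apply: closureS.
by move=> _ [w [[n _ wn] w0] <-]; exists n.+1 => //; right; exists w.
Qed.

End Saturation.

Theorem lemma3p4 (R : realType) (X1 X2 Y : completeNormedModType R)
  (A : set (X1 * X2)) (Delta : X1 * X2 -> Y) :
  separable A ->
  (forall x, sphere x -> sphere (Delta x)) ->
  (forall x y, sphere x -> sphere y -> `|Delta x - Delta y| = `|x - y|) ->
  (forall y, sphere y -> exists2 x, sphere x & Delta x = y) ->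
  exists (M1 : set X1) (M2 : set X2) (N : set Y),
    [/\ closed_subspace M1 /\ separable M1,
        closed_subspace M2 /\ separable M2,
        closed_subspace N /\ separable N,
        A `<=` prod_sub M1 M2 &
        Delta @` sphere_in (prod_sub M1 M2) = sphere_in N].
Proof.
move=> [D0 [cD0 _ AD0]] Delta_sphere Delta_iso Delta_onto.
have /choice [g g_inv] : forall y, exists x, sphere y -> sphere x /\ Delta x = y.
  move=> y; have [sy|nsy] := pselect (sphere y); last by exists 0 => /nsy.
  by have [x sx <-] := Delta_onto y sy; exists x.
have g_sphere y : sphere y -> sphere (g y) by move=> sy; case: (g_inv y sy).
have Delta_g y : sphere y -> Delta (g y) = y by move=> sy; case: (g_inv y sy).
exists (M1 Delta g D0), (M2 Delta g D0), (N Delta g D0); split.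
- exact: M1_closed_subspace.
- exact: M2_closed_subspace.
- exact: N_closed_subspace.
- by move=> a /AD0; apply: closure_D0_sub.
apply/seteqP; split; first exact: Delta_sphere_prod_sub.
exact: sphere_N_sub_Delta.
Qed.
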